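(* Let $G$ be a finite group, $A=\mathbb{C}[[z]]$ with maximal ideal $\mathfrak{m}=(z)$, and $\phi:G\to\Aut_{\mathbb{R}}(A)$ an injective group homomorphism. Then exactly one of the following holds. (a) Every $\phi_g$ is $\mathbb{C}$-linear. Then $G=\langle\varrho\mid\varrho^n=e\rangle$ is cyclic of some order $n$, and there is a local parameter $w\in\mathfrak{m}$ (generator of $\mathfrak{m}$) with $\phi_\varrho(w)=\xi w$, where $\xi=\exp(2\pi i/n)$. (b) Otherwise $G\cong D_n=\langle\sigma,\varrho\mid\sigma^2=e=\varrho^n,\ \sigma\varrho\sigma^{-1}=\varrho^{-1}\rangle$ for some $n\in\mathbb{N}$, and there is a local parameter $w\in\mathfrak{m}$ such that $\phi_\sigma(\alpha)=\bar\alpha$ for $\alpha\in\mathbb{C}$, $\phi_\sigma(w)=w$, $\phi_\varrho(\alpha)=\alpha$ for $\alpha\in\mathbb{C}$, and $\phi_\varrho(w)=\xi w$ with $\xi=\exp(2\pi i/n)$. *)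

From HB Require Import structures.
From mathcomp Require Import all_boot all_order all_algebra all_fingroup.
From mathcomp Require Import complex.
From mathcomp Require Import reals trigo.
Set Implicit Arguments. Unset Strict Implicit. Unset Printing Implicit Defensive.
Import Order.TTheory GRing.Theory Num.Theory.
Local Open Scope ring_scope.

Definition fps (R : realType) := nat -> R[i].

Section FPS.
Variable R : realType.

Definition fps_add (a b : fps R) : fps R := fun k => a k + b k.
Definition fps_mul (a b : fps R) : fps R :=
  fun k => \sum_(j < k.+1) a j * b (k - j)%N.
Definition fps_const (c : R[i]) : fps R := fun k => if k == 0%N then c else 0.
Definition fps_one : fps R := fps_const 1.

Definition in_max_ideal (a : fps R) : Prop := a 0%N = 0.

Definition local_parameter (w : fps R) : Prop :=
  in_max_ideal w /\ forall a, in_max_ideal a -> exists b, a = fps_mul b w.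

Definition is_R_aut (f : fps R -> fps R) : Prop :=
  [/\ bijective f,
      forall a b, f (fps_add a b) = fps_add (f a) (f b),
      forall a b, f (fps_mul a b) = fps_mul (f a) (f b),
      f fps_one = fps_one &
      forall (r : R) a, f (fps_mul (fps_const (Complex r 0)) a) = fps_mul (fps_const (Complex r 0)) (f a)].

Definition is_C_linear (f : fps R -> fps R) : Prop :=
  forall (c : R[i]) a, f (fps_mul (fps_const c) a) = fps_mul (fps_const c) (f a).

Definition xi_n (n : nat) : R[i] :=
  Complex (cos (2 * pi / n%:R)) (sin (2 * pi / n%:R)).

End FPS.

From HB Require Import structures.
From mathcomp Require Import all_boot all_order all_algebra all_fingroup all_solvable.
From mathcomp Require Import complex ring lra.
From mathcomp Require Import reals trigo.
From Stdlib Require Import FunctionalExtensionality.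
Set Implicit Arguments. Unset Strict Implicit. Unset Printing Implicit Defensive.
Import Order.TTheory GRing.Theory Num.Theory.
Local Open Scope ring_scope.

(* An R-algebra automorphism of C[[z]] fixes the real constants, so it sends
   the constant i to a constant square root of -1: it acts on C either
   trivially or by conjugation, and the C-linear elements form a subgroup H of
   index at most 2.  On H, g |-> (coefficient of z in phi_g z) is a character
   into C^*, injective because a C-linear automorphism fixing a local
   parameter is the identity; so H is cyclic of order n, generated by some rho
   with character value xi = exp(2 pi i / n), and averaging the phi_h z
   against the character gives a local parameter w with phi_rho w = xi w.
   An antilinear sigma has sigma^2 in H with positive character value
   |a|^2, a root of unity, so sigma^2 = 1; likewise sigma inverts every
   element of H, hence G is dihedral, and w + phi_sigma w (after rescaling w
   by i if necessary) is a sigma-fixed local parameter that is still a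
   xi-eigenvector of rho. *)

Section FormalPowerSeries.
Variable R : realType.
Implicit Types (a b c u w x : fps R) (d e : R[i]).

Lemma fps_ext a b : (forall k, a k = b k) -> a = b.
Proof. exact: functional_extensionality. Qed.

Lemma fps_mul_constl d a : fps_mul (fps_const d) a = fun k => d * a k.
Proof.
apply: fps_ext => k; rewrite /fps_mul big_ord_recl subn0 /fps_const /=.
by rewrite big1 ?addr0 // => j _; rewrite mul0r.
Qed.

Lemma fps_mul_constr a d : fps_mul a (fps_const d) = fun k => a k * d.
Proof.
apply: fps_ext => k; rewrite /fps_mul big_ord_recr /= subnn /fps_const /=.
rewrite big1 ?add0r // => -[j /= ltjk] _.
by rewrite subn_eq0 leqNgt ltjk mulr0.
Qed.

Lemma fps_mulr1 a : fps_mul a (fps_one R) = a.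
Proof. by rewrite fps_mul_constr; apply: fps_ext => k; rewrite mulr1. Qed.

Lemma fps_const_mul d e : fps_mul (fps_const d) (fps_const e) = fps_const (d * e) :> fps R.
Proof.
by rewrite fps_mul_constl; apply: fps_ext => k; rewrite /fps_const; case: eqP; rewrite ?mulr0.
Qed.

Lemma fps_const_add d e : fps_add (fps_const d) (fps_const e) = fps_const (d + e) :> fps R.
Proof.
by apply: fps_ext => k; rewrite /fps_add /fps_const; case: eqP; rewrite ?addr0.
Qed.

Lemma fps_mul_coef0 a b : fps_mul a b 0%N = a 0%N * b 0%N.
Proof. by rewrite /fps_mul big_ord_recl big_ord0 addr0. Qed.

Lemma fps_mul_coef1 a b : fps_mul a b 1%N = a 0%N * b 1%N + a 1%N * b 0%N.
Proof. by rewrite /fps_mul !big_ord_recl big_ord0 addr0. Qed.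

Definition fps_shift a : fps R := fun k => if k is k'.+1 then a k' else 0.

Definition fps_z : fps R := fps_shift (fps_one R).

Lemma fps_mul_shift a b : fps_mul a (fps_shift b) = fps_shift (fps_mul a b).
Proof.
apply: fps_ext => -[|k]; rewrite /fps_mul /fps_shift.
  by rewrite big_ord_recl big_ord0 mulr0 addr0.
rewrite big_ord_recr /= subnn mulr0 addr0; apply: eq_bigr => -[j ltjk] _ /=.
by rewrite subSn.
Qed.

(* Step [n] of the fixed-point iteration for the quotient [b] with
   [b * u = c]; its [k]-th coefficient is correct, and frozen, from step [k] on. *)
Fixpoint fps_div_iter c u (n k : nat) : R[i] :=
  if n is n'.+1 then
    (c k - \sum_(j < k) fps_div_iter c u n' j * u (k - j)%N) / u 0%N
  else c 0%N / u 0%N.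

Lemma fps_div_iter_stable c u n k :
  (k <= n)%N -> fps_div_iter c u n k = fps_div_iter c u k k.
Proof.
elim/ltn_ind: n k => -[|n] IHn [|k] // lekn /=; first by rewrite big_ord0 subr0.
congr ((_ - _) / _); apply: eq_bigr => -[j ltjk] _ /=.
by rewrite (IHn n) ?(IHn k) // -ltnS (leq_trans ltjk).
Qed.

Lemma fps_divr_exists c u : u 0%N != 0 -> exists b, fps_mul b u = c.
Proof.
move=> u0; exists (fun k => fps_div_iter c u k k); apply: fps_ext => -[|k].
  by rewrite fps_mul_coef0 /= divfK.
rewrite /fps_mul big_ord_recr /= subnn divfK //.
rewrite (eq_bigr (fun j : 'I_k.+1 => fps_div_iter c u k j * u (k.+1 - j)%N)).
  by rewrite addrC subrK.
by move=> -[j ltjk] _; rewrite /= fps_div_iter_stable.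
Qed.

Lemma fps_sqr_const x e : e != 0 -> fps_mul x x = fps_const e ->
  x = fps_const (x 0%N) /\ x 0%N ^+ 2 = e.
Proof.
move=> e0 xxe; have x0e : x 0%N ^+ 2 = e by rewrite expr2 -fps_mul_coef0 xxe.
have x0 : x 0%N != 0 by apply: contra_neq e0 => x00; rewrite -x0e x00 expr0n.
split=> //; apply: fps_ext => k; rewrite /fps_const.
case: eqP => [-> // | /eqP]; rewrite -lt0n.
elim/ltn_ind: k => -[//|k] IHk _.
have := congr1 (fun a => a k.+1) xxe; rewrite /fps_mul /fps_const /=.
rewrite big_ord_recl big_ord_recr /= subn0 subnn big1 => [|[j ltjk] _]; last first.
  by rewrite /bump /= IHk ?mul0r // add1n ltnS.
move/eqP; rewrite add0r mulrC -mulr2n -mulrnAl mulf_eq0 (negbTE x0) /=.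
by rewrite orbF mulrn_eq0 => /eqP.
Qed.

Lemma local_parameter_coef w : w 0%N = 0 -> w 1%N != 0 -> local_parameter w.
Proof.
move=> w0 w1; split=> // a a0.
have [b ab] := fps_divr_exists (fun k => a k.+1) (u := fun k => w k.+1) w1.
exists b; have -> : w = fps_shift (fun k => w k.+1) by apply: fps_ext => -[].
by rewrite fps_mul_shift ab; apply: fps_ext => -[].
Qed.

Lemma local_parameter_z : local_parameter fps_z.
Proof. by apply: local_parameter_coef; rewrite //= /fps_one /fps_const /= oner_neq0. Qed.

Lemma local_parameter_decomp w a : local_parameter w ->
  exists b, a = fps_add (fps_const (a 0%N)) (fps_mul b w).
Proof.
case=> _ /(_ (fun k => a k - fps_const (a 0%N) k)) [|b ab].
  by rewrite /in_max_ideal /fps_const /= subrr.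
by exists b; rewrite -ab; apply: fps_ext => k; rewrite /fps_add addrC subrK.
Qed.

End FormalPowerSeries.

Section RealAutomorphism.
Variables (R : realType) (f : fps R -> fps R).
Hypothesis f_aut : is_R_aut f.

Let f_add a b : f (fps_add a b) = fps_add (f a) (f b).
Proof. by case: f_aut. Qed.

Let f_mul a b : f (fps_mul a b) = fps_mul (f a) (f b).
Proof. by case: f_aut. Qed.

Lemma R_aut_real_const (r : R) : f (fps_const (r%:C)%C) = fps_const (r%:C)%C.
Proof.
case: f_aut => _ _ _ f1 /(_ r (fps_one R)).
by rewrite f1 !fps_mulr1.
Qed.

(* The image of the constant [i] squares to the constant [-1], hence is the
   constant [i] or [-i]. *)
Lemma R_aut_const :
  (forall d, f (fps_const d) = fps_const d) \/
  (forall d, f (fps_const d) = fps_const (conjc d)).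
Proof.
have ii : fps_mul (f (fps_const 'i%C)) (f (fps_const 'i%C)) = fps_const (-1).
  by rewrite -f_mul fps_const_mul -expr2 sqr_i -(rmorphN1 (real_complex R)) R_aut_real_const.
have [|fiE /eqP] := fps_sqr_const _ ii; first by rewrite oppr_eq0 oner_neq0.
rewrite -sqr_i eqf_sqr => /orP[] /eqP fi0;
  [left | right] => d; rewrite [d]complexE -fps_const_add -fps_const_mul.
all: by rewrite f_add f_mul !R_aut_real_const fiE fi0 fps_const_mul fps_const_add;
  congr fps_const; simpc.
Qed.

Lemma R_aut_surj_const d : exists e, f (fps_const e) = fps_const d.
Proof. by case: R_aut_const => fd; [exists d | exists (conjc d); rewrite fd conjcK]. Qed.

(* Write the constant term of [f a] as that of [f d] for a constant [d]; if it
   were nonzero, [a - d] would be a unit whose image has constant term 0. *)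
Lemma R_aut_max_ideal a : in_max_ideal a -> in_max_ideal (f a).
Proof.
rewrite /in_max_ideal => a0; case: (eqVneq (f a 0%N) 0) => // fa0.
have [d fd] := R_aut_surj_const (f a 0%N).
pose x : fps R := fun k => a k - fps_const d k.
have ax : a = fps_add x (fps_const d) by apply: fps_ext => k; rewrite /fps_add subrK.
have fx0 : f x 0%N = 0.
  have := congr1 (fun u => u 0%N) (f_add x (fps_const d)).
  by rewrite -ax fd /fps_add /fps_const /= => /esym/eqP; rewrite -subr_eq0 addrK => /eqP.
have [|y yx] := fps_divr_exists (fps_one R) (u := x).
  rewrite /x a0 /fps_const /= sub0r oppr_eq0; apply: contraNneq fa0 => d0.
  move: fd; rewrite d0; case: R_aut_const => ->; rewrite ?conjc0;
    by move=> /(congr1 (fun u => u 0%N)); rewrite /fps_const /= => <-.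
have := congr1 (fun u => u 0%N) (f_mul y x).
rewrite yx fps_mul_coef0 fx0 mulr0; case: f_aut => _ _ _ -> _.
by rewrite /fps_one /fps_const /= => /eqP; rewrite oner_eq0.
Qed.

Section ConstantAction.
Variable e : R[i] -> R[i].
Hypothesis f_const : forall d, f (fps_const d) = fps_const (e d).

Let f_z0 : f (fps_z R) 0%N = 0.
Proof. exact: R_aut_max_ideal. Qed.

Lemma R_aut_coef0 a : f a 0%N = e (a 0%N).
Proof.
have [b {1}->] := local_parameter_decomp a (local_parameter_z R).
by rewrite f_add f_mul f_const /fps_add fps_mul_coef0 f_z0 mulr0 addr0 /fps_const.
Qed.

Lemma R_aut_coef1 a : f a 1%N = e (a 1%N) * f (fps_z R) 1%N.
Proof.
have [b ea] := local_parameter_decomp a (local_parameter_z R).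
rewrite {1}ea f_add f_mul f_const /fps_add !fps_mul_coef1 f_z0 R_aut_coef0 /fps_const /=.
rewrite !mulr0 !addr0 !add0r ea /fps_add fps_mul_coef1 /fps_const /=.
by rewrite /fps_z /fps_shift /fps_one /fps_const /= mulr1 mulr0 addr0 add0r.
Qed.

Lemma R_aut_z_coef1_neq0 : f (fps_z R) 1%N != 0.
Proof.
case: f_aut => -[g _ fgK] _ _ _ _.
apply: contra_eq_neq (R_aut_coef1 (g (fps_z R))) => ->.
by rewrite fgK mulr0 /= /fps_one /fps_const /= oner_neq0.
Qed.

End ConstantAction.

Lemma R_aut_eq_id w : (forall d, f (fps_const d) = fps_const d) ->
  local_parameter w -> f w = w -> f =1 id.
Proof.
move=> f_const w_lp fw a; apply: fps_ext => j; move: {2}j.+1 (ltnSn j) a => k.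
elim: k j => [//|k IHk] j ltjk a.
have [b ->] := local_parameter_decomp a w_lp.
rewrite f_add f_mul f_const fw /fps_add; congr (_ + _); rewrite /fps_mul.
case: w_lp => w0 _; case: j ltjk => [|j] ltjk.
  by rewrite !big_ord_recl !big_ord0 w0 !mulr0.
rewrite big_ord_recr [RHS]big_ord_recr /= subnn w0 !mulr0 !addr0.
apply: eq_bigr => -[i lti] _ /=.
by rewrite IHk // (leq_trans lti).
Qed.

Lemma R_aut_sum (I : Type) (s : seq I) (P : pred I) (c : I -> R[i]) (F : I -> fps R) :
  (forall d, f (fps_const d) = fps_const d) ->
  f (fun k => \sum_(i <- s | P i) c i * F i k) = fun k => \sum_(i <- s | P i) c i * f (F i) k.
Proof.
move=> f_const; elim: s => [|x s IHs].
  have sum0 : (fun k => \sum_(i <- [::] | P i) c i * F i k) = fps_const 0.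
    by apply: fps_ext => k; rewrite big_nil /fps_const; case: eqP.
  by rewrite sum0 f_const; apply: fps_ext => k; rewrite big_nil /fps_const; case: eqP.
pose G k := \sum_(i <- s | P i) c i * F i k.
have -> : (fun k => \sum_(i <- x :: s | P i) c i * F i k) =
    if P x then fps_add (fps_mul (fps_const (c x)) (F x)) G else G.
  by apply: fps_ext => k; rewrite big_cons; case: (P x); rewrite ?fps_mul_constl.
apply: fps_ext => k; rewrite big_cons; case: (P x); last by rewrite IHs.
by rewrite f_add f_mul f_const fps_mul_constl IHs.
Qed.

End RealAutomorphism.

Lemma primitive_root_min (F : idomainType) n (z : F) : (0 < n)%N -> z ^+ n = 1 ->
  (forall k, (0 < k < n)%N -> z ^+ k != 1) -> n.-primitive_root z.
Proof.
move=> n_gt0 zn1 zk1; have [m prim_m dvd_mn] := prim_order_exists n_gt0 zn1.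
have m_gt0 := prim_order_gt0 prim_m.
case: (ltngtP m n) => [ltmn | ltnm | <- //].
  by have := zk1 m; rewrite m_gt0 ltmn prim_expr_order // eqxx => /(_ isT).
by have := dvdn_leq n_gt0 dvd_mn; rewrite leqNgt ltnm.
Qed.

Section RootOfUnity.
Variable R : realType.

Lemma xi_n_expr n k : xi_n R n ^+ k =
  Complex (cos (k%:R * (2 * pi / n%:R))) (sin (k%:R * (2 * pi / n%:R))).
Proof.
elim: k => [|k IHk]; first by rewrite expr0 mul0r cos0 sin0.
rewrite exprSr IHk /xi_n; set t := 2 * pi / n%:R.
rewrite -addn1 natrD mulrDl mul1r cosD sinD.
by apply/eqP; rewrite eq_complex /=; apply/andP; split; apply/eqP; ring.
Qed.

Lemma cos_sin_neq1 (x : R) : 0 < x < pi *+ 2 -> Complex (cos x) (sin x) != 1.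
Proof.
case/andP=> x_gt0 x_lt2pi; apply/negP => /eqP[cx1 sx0].
case: (ltgtP x pi) => [ltxpi | ltpix | xpi].
- by have := sin_gt0_pi (x := x); rewrite x_gt0 ltxpi sx0 ltxx => /(_ isT).
- have : 0 < sin (x - pi) by apply: sin_gt0_pi; rewrite subr_gt0 ltpix ltrBlDr -mulr2n.
  by rewrite sinB cospi sinpi sx0 cx1 !mulr0 mul0r subr0 ltxx.
- by move: cx1; rewrite xpi cospi; lra.
Qed.

Lemma xi_n_prim n : (0 < n)%N -> n.-primitive_root (xi_n R n).
Proof.
move=> n_gt0; have n_neq0 : (n%:R : R) != 0 by rewrite pnatr_eq0 -lt0n.
have pi2_gt0 : 0 < 2 * pi :> R by rewrite mulr_gt0 ?pi_gt0.
apply: primitive_root_min => // [|k /andP[k_gt0 ltkn]]; rewrite xi_n_expr.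
  by rewrite mulrCA divff // mulr1 mulr_natl cos2pi sin2pi.
apply: cos_sin_neq1.
have -> : k%:R * (2 * pi / n%:R) = 2 * pi * (k%:R / n%:R) :> R by ring.
have -> : pi *+ 2 = 2 * pi * 1 :> R by rewrite mulr1 mulr_natl.
rewrite pmulr_rgt0 // ltr_pM2l // divr_gt0 ?ltr0n //=.
by rewrite ltr_pdivrMr ?ltr0n // mul1r ltr_nat.
Qed.

End RootOfUnity.

Section DihedralPresentation.
Local Open Scope group_scope.
Variable gT : finGroupType.

Lemma joing_cycles (x y : gT) : <[x]> <*> <[y]> = <<[set x; y]>>.
Proof. by rewrite joing_idl joing_idr. Qed.

Lemma homg_dihedral_swap (rT : finGroupType) (H : {group rT}) n :
  (H \homg Grp (s : r : (s ^+ 2, r ^+ n, s * r * s^-1 = r^-1))) =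
  (H \homg Grp (x : y : (x ^+ n, y ^+ 2, x ^ y = x^-1))).
Proof.
apply/existsP/existsP => -[[a b]] /=; rewrite !xpair_eqE.
  case/and4P=> /eqP genH /eqP a2 /eqP bn /eqP aba; exists (b, a).
  rewrite /= !xpair_eqE joingC genH a2 bn !eqxx /=.
  have aV : a^-1 = a by apply/eqP; rewrite eq_invg_mul -[a * a]/(a ^+ 2) a2.
  by rewrite /conjg -aba aV mulgA.
case/and4P=> /eqP genH /eqP an /eqP b2 /eqP aba; exists (b, a).
rewrite /= !xpair_eqE joingC genH an b2 !eqxx /=.
have bV : b^-1 = b by apply/eqP; rewrite eq_invg_mul -[b * b]/(b ^+ 2) b2.
by rewrite -aba /conjg bV mulgA.
Qed.

Lemma isog_dihedral (s r : gT) n : (0 < n)%N ->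
  s ^+ 2 = 1 -> r ^+ n = 1 -> s * r * s^-1 = r^-1 -> <<[set s; r]>> = [set: gT] ->
  #|[set: gT]| = n.*2 ->
  [set: gT]%G \isog Grp (s : r : (s ^+ 2, r ^+ n, s * r * s^-1 = r^-1)).
Proof.
move=> n_gt0 s2 rn srs gen_sr cardG.
have homG : [set: gT]%G \homg Grp (s : r : (s ^+ 2, r ^+ n, s * r * s^-1 = r^-1)).
  apply/existsP; exists (s, r); rewrite /= !xpair_eqE.
  by rewrite joing_cycles gen_sr s2 rn srs !eqxx.
(* [Grp_dihedral] needs [n > 1]; for [n = 1] the group is cyclic of order 2. *)
case: n n_gt0 rn srs homG cardG => // -[_ | q _] rn srs homG cardG.
  apply: intro_isoGrp => // rT H /existsP[[a b]] /=; rewrite !xpair_eqE.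
  case/and4P=> /eqP genH /eqP a2 /eqP b1 _; rewrite expg1 in b1.
  have Gs : [set: gT] = <[s]>.
    by rewrite -gen_sr -joing_cycles -[r]expg1 rn cycle1 joingG1.
  have dvd_as : (#[a] %| #[s])%N.
    by rewrite [#[s]]orderE -Gs cardG order_dvdn a2.
  rewrite Gs; apply/homgP; exists (eltm_morphism dvd_as).
  by rewrite im_eltm -genH b1 cycle1 joingG1.
have isoD := @Grp_dihedral q.+2 isT.
have GD : [set: gT]%G \isog 'D_(q.+2).*2.
  apply/(isoGrpP _ isoD); split; first by rewrite card_dihedral.
  by rewrite -homg_dihedral_swap.
by move=> rT H; rewrite (eq_homgr _ GD) isoD homg_dihedral_swap.
Qed.

End DihedralPresentation.

Section FiniteAction.
Variables (R : realType) (gT : finGroupType) (phi : gT -> fps R -> fps R).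
Hypothesis phi_aut : forall g, is_R_aut (phi g).
Hypothesis phi_hom : forall g h, phi (g * h)%g = phi g \o phi h.
Hypothesis phi_inj : injective phi.

Definition fixes_i g : bool := phi g (fps_const 'i%C) 0%N == 'i%C.

Definition const_act g (d : R[i]) := if fixes_i g then d else conjc d.

Definition lin_coef g : R[i] := phi g (fps_z R) 1%N.

Definition Clin : {set gT} := [set g | fixes_i g].

Lemma conjc_i_neq : conjc ('i%C : R[i]) != 'i%C.
Proof. by rewrite eq_complex /= eqxx /=; apply/negP => /eqP; lra. Qed.

Lemma phi_const g d : phi g (fps_const d) = fps_const (const_act g d).
Proof.
rewrite /const_act /fixes_i; case: (R_aut_const (phi_aut g)) => phiE.
  by rewrite !phiE /fps_const /= eqxx.
by rewrite !phiE /fps_const /= (negbTE conjc_i_neq).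
Qed.

Lemma const_act_lin g d : g \in Clin -> const_act g d = d.
Proof. by rewrite inE /const_act => ->. Qed.

Lemma const_act_antilin g d : g \notin Clin -> const_act g d = conjc d.
Proof. by rewrite inE /const_act => /negbTE ->. Qed.

Lemma phi1 : phi 1%g =1 id.
Proof.
move=> a; case: (phi_aut 1%g) => /bij_inj phi1_inj _ _ _ _; apply: phi1_inj.
by have := congr1 (fun f => f a) (phi_hom 1%g 1%g); rewrite mulg1.
Qed.

Lemma const_actM g h d : const_act (g * h)%g d = const_act g (const_act h d).
Proof.
have := congr1 (fun a => a 0%N) (phi_const (g * h)%g d).
by rewrite phi_hom /= !phi_const /fps_const /=.
Qed.

Lemma fixes_iE g : fixes_i g = (const_act g 'i%C == 'i%C).
Proof. by rewrite /const_act; case: fixes_i; rewrite ?eqxx ?(negbTE conjc_i_neq). Qed.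

Lemma fixes_iM g h : fixes_i (g * h)%g = (fixes_i g == fixes_i h).
Proof.
rewrite !fixes_iE const_actM /const_act.
by case: (fixes_i h); case: (fixes_i g); rewrite ?conjcK ?eqxx ?(negbTE conjc_i_neq).
Qed.

Lemma fixes_i1 : fixes_i 1%g.
Proof. by rewrite /fixes_i phi1 /fps_const /=. Qed.

Lemma group_set_Clin : group_set Clin.
Proof.
apply/group_setP; split=> [|g h]; rewrite !inE ?fixes_i1 //.
by rewrite fixes_iM => -> ->.
Qed.

Canonical Clin_group := Group group_set_Clin.

Lemma is_C_linearP g : is_C_linear (phi g) <-> g \in Clin.
Proof.
split=> [g_lin | g_Clin d a]; last first.
  by case: (phi_aut g) => _ _ -> _ _; rewrite phi_const const_act_lin.
have := g_lin 'i%C (fps_one R); rewrite !fps_mulr1 inE /fixes_i => ->.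
by case: (phi_aut g) => _ _ _ -> _; rewrite fps_mulr1 /fps_const /= eqxx.
Qed.

Lemma lin_coefM g h : lin_coef (g * h)%g = const_act g (lin_coef h) * lin_coef g.
Proof. by rewrite /lin_coef phi_hom /=; apply: R_aut_coef1 => // d; apply: phi_const. Qed.

Lemma lin_coefMl g h : g \in Clin -> lin_coef (g * h)%g = lin_coef g * lin_coef h.
Proof. by move=> g_Clin; rewrite lin_coefM const_act_lin // mulrC. Qed.

Lemma lin_coef1 : lin_coef 1%g = 1.
Proof. by rewrite /lin_coef phi1. Qed.

Lemma lin_coef_neq0 g : lin_coef g != 0.
Proof. exact: (R_aut_z_coef1_neq0 (phi_aut g) (phi_const g)). Qed.

Lemma lin_coefV g : g \in Clin -> lin_coef g^-1%g = (lin_coef g)^-1.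
Proof.
move=> g_Clin; apply: (mulfI (lin_coef_neq0 g)).
by rewrite -lin_coefMl // mulgV lin_coef1 mulfV ?lin_coef_neq0.
Qed.

Lemma lin_coefX g k : g \in Clin -> lin_coef (g ^+ k)%g = lin_coef g ^+ k.
Proof.
move=> g_Clin; elim: k => [|k IHk]; first by rewrite expg0 lin_coef1.
by rewrite expgS lin_coefMl // IHk exprS.
Qed.

Lemma lin_coef_expn g : g \in Clin -> lin_coef g ^+ #|Clin| = 1.
Proof. by move=> g_Clin; rewrite -lin_coefX // expg_cardG // lin_coef1. Qed.

Lemma lin_coef_conj g : g \in Clin -> conjc (lin_coef g) = (lin_coef g)^-1.
Proof.
move=> g_Clin; have n_gt0 : (0 < #|Clin|)%N := cardG_gt0 _.
apply: (mulfI (lin_coef_neq0 g)); rewrite mulfV ?lin_coef_neq0 //; apply/eqP.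
rewrite -(pexpr_eq1 n_gt0) ?mulcJ_ge0 // exprMn lin_coef_expn //.
by rewrite -(rmorphXn conjc) lin_coef_expn // rmorph1 mulr1.
Qed.

Definition avg_param : fps R :=
  fun k => \sum_(h in Clin) (lin_coef h)^-1 * phi h (fps_z R) k.

Lemma phi_avg_param g : g \in Clin ->
  phi g avg_param = fun k => lin_coef g * avg_param k.
Proof.
move=> g_Clin; have phi_const_lin d : phi g (fps_const d) = fps_const d.
  by rewrite phi_const const_act_lin.
rewrite /avg_param R_aut_sum //; apply: fps_ext => k.
rewrite mulr_sumr (reindex_inj (mulgI g^-1%g)) /=.
apply: eq_big => [h | h h_Clin]; first by rewrite groupMl ?groupV.
have -> : phi g (phi (g^-1 * h)%g (fps_z R)) = phi h (fps_z R).
  by have := congr1 (@^~ (fps_z R)) (phi_hom g (g^-1 * h)%g); rewrite mulKVg.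
by rewrite lin_coefMl ?groupV // lin_coefV // invfM invrK mulrA.
Qed.

Lemma avg_param_coef0 : avg_param 0%N = 0.
Proof. by rewrite /avg_param big1 // => h _; rewrite (R_aut_max_ideal (phi_aut h)) ?mulr0. Qed.

Lemma avg_param_coef1 : avg_param 1%N = #|Clin|%:R.
Proof.
rewrite /avg_param (eq_bigr (fun=> 1)) ?sumr_const // => h _.
by rewrite mulVf ?lin_coef_neq0.
Qed.

Lemma local_parameter_avg_param : local_parameter avg_param.
Proof.
apply: local_parameter_coef; rewrite ?avg_param_coef0 ?avg_param_coef1 //.
by rewrite pnatr_eq0 -lt0n cardG_gt0.
Qed.

Lemma lin_coef_eq1 g : g \in Clin -> lin_coef g = 1 -> g = 1%g.
Proof.
move=> g_Clin g1; apply: phi_inj; apply: functional_extensionality => a.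
rewrite phi1 (R_aut_eq_id (phi_aut g) _ local_parameter_avg_param) // => [d|].
  by rewrite phi_const const_act_lin.
by rewrite phi_avg_param // g1; apply: fps_ext => k; rewrite mul1r.
Qed.

Lemma lin_coef_inj : {in Clin &, injective lin_coef}.
Proof.
move=> g h g_Clin h_Clin gh; apply/eqP; rewrite eq_mulgV1; apply/eqP.
apply: lin_coef_eq1; first by rewrite groupM ?groupV.
by rewrite lin_coefMl // lin_coefV // gh mulfV ?lin_coef_neq0.
Qed.

Lemma Clin_generator : exists2 rho, <[rho]>%g = Clin & lin_coef rho = xi_n R #|Clin|.
Proof.
have /cyclicP[x Clin_x] : cyclic Clin.
  apply: (@field_mul_group_cyclic _ _ _ lin_coef) => [g h /lin_coefMl -> //|g g_Clin].
  by split=> [/(lin_coef_eq1 g_Clin) | ->]; rewrite ?lin_coef1.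
have x_Clin : x \in Clin by rewrite Clin_x cycle_id.
have xk_Clin k : (x ^+ k)%g \in Clin by rewrite groupX.
set n := #|Clin|; have n_gt0 : (0 < n)%N := cardG_gt0 _.
have prim_x : n.-primitive_root (lin_coef x).
  apply: primitive_root_min; rewrite ?lin_coef_expn // => k /andP[k_gt0 ltkn].
  rewrite -lin_coefX // -lin_coef1; apply/eqP => /(lin_coef_inj (xk_Clin k) (group1 _)) xk1.
  have : (#[x]%g %| k)%N by rewrite order_dvdn xk1.
  by rewrite orderE -Clin_x => /(dvdn_leq k_gt0); rewrite leqNgt ltkn.
have [i xi_xi] := prim_rootP prim_x (prim_expr_order (xi_n_prim R n_gt0)).
have rho_xi : lin_coef (x ^+ i)%g = xi_n R n by rewrite lin_coefX.
exists (x ^+ i)%g => //; apply/eqP; rewrite eqEcard cycle_subG xk_Clin /= -orderE.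
rewrite dvdn_leq ?order_gt0 // (prim_order_dvd (xi_n_prim R n_gt0)) -rho_xi.
by rewrite -lin_coefX ?xk_Clin // expg_order lin_coef1.
Qed.

Lemma phiM g h a : phi (g * h)%g a = phi g (phi h a).
Proof. by rewrite phi_hom. Qed.

Lemma phi_scale g d a : phi g (fun k => d * a k) = fun k => const_act g d * phi g a k.
Proof.
case: (phi_aut g) => _ _ phi_mul _ _.
by rewrite -fps_mul_constl phi_mul phi_const fps_mul_constl.
Qed.

Section Antilinear.
Variable s : gT.
Hypothesis s_antilin : s \notin Clin.

Let antilinM_Clin g : ((s * g)%g \in Clin) = (g \notin Clin).
Proof. by move: s_antilin; rewrite !inE fixes_iM => /negbTE ->; case: fixes_i. Qed.

Lemma antilin_coef_norm : conjc (lin_coef s) * lin_coef s = 1.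
Proof.
have ss_Clin : (s * s)%g \in Clin by rewrite antilinM_Clin.
have Lss : lin_coef (s * s)%g = conjc (lin_coef s) * lin_coef s.
  by rewrite lin_coefM const_act_antilin.
apply/eqP; rewrite -(pexpr_eq1 (cardG_gt0 Clin_group)); last by rewrite mulrC mulcJ_ge0.
by rewrite -Lss lin_coef_expn.
Qed.

Lemma antilin_sqr : (s ^+ 2 = 1)%g.
Proof.
apply: lin_coef_eq1; first by rewrite antilinM_Clin.
by rewrite expgS expg1 lin_coefM const_act_antilin // antilin_coef_norm.
Qed.

Lemma antilin_invg : s^-1%g = s.
Proof. by rewrite -[s^-1%g]mul1g -antilin_sqr expgS expg1 mulgK. Qed.

Lemma antilin_conjg r : r \in Clin -> (s * r * s^-1 = r^-1)%g.
Proof.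
move=> r_Clin; have sr_antilin : (s * r)%g \notin Clin by rewrite antilinM_Clin r_Clin.
rewrite antilin_invg; apply: lin_coef_inj; rewrite ?groupV //.
  by rewrite -mulgA antilinM_Clin; move: r_Clin s_antilin; rewrite !inE fixes_iM => -> /negbTE ->.
rewrite lin_coefM const_act_antilin // lin_coefM const_act_antilin //.
by rewrite lin_coefV // -lin_coef_conj // mulrCA antilin_coef_norm mulr1.
Qed.

Lemma Clin_complement : ~: Clin = (s *: Clin)%g.
Proof. by apply/setP => g; rewrite inE mem_lcoset -antilinM_Clin antilin_invg. Qed.

Lemma card_antilin : #|[set: gT]| = #|Clin|.*2.
Proof. by rewrite cardsT -(cardsC Clin) Clin_complement card_lcoset addnn. Qed.

Lemma antilin_gen rho : <[rho]>%g = Clin -> <<[set s; rho]>>%g = [set: gT].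
Proof.
move=> Clin_rho; apply/eqP; rewrite eqEsubset subsetT /=; apply/subsetP => g _.
have Clin_sub : Clin \subset <<[set s; rho]>>%g.
  by rewrite -Clin_rho cycle_subG mem_gen // !inE eqxx orbT.
have [/(subsetP Clin_sub) // | g_antilin] := boolP (g \in Clin).
have : g \in (s *: Clin)%g by rewrite -Clin_complement inE.
case/lcosetP => h /(subsetP Clin_sub) h_gen ->.
by rewrite groupM // mem_gen // !inE eqxx.
Qed.

Lemma phi_antilin_avg_param r : r \in Clin ->
  phi r (phi s avg_param) = fun k => lin_coef r * phi s avg_param k.
Proof.
move=> r_Clin; have rs : (r * s = s * r^-1)%g.
  by rewrite -{1}(invgK r) -(antilin_conjg (groupVr r_Clin)) mulgVK.
rewrite -phiM rs phiM phi_avg_param ?groupV // phi_scale const_act_antilin //.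
by rewrite lin_coefV // -lin_coef_conj // conjcK.
Qed.

Lemma antilin_fixed_param : exists w, [/\ local_parameter w, phi s w = w &
  forall r, r \in Clin -> phi r w = fun k => lin_coef r * w k].
Proof.
set a := lin_coef s.
(* [c] keeps the linear coefficient [#|Clin| * (c + c^* a)] of [w] nonzero. *)
pose c : R[i] := if a == -1 then 'i%C else 1.
pose v : fps R := fun k => c * avg_param k.
have phi_s2 b : phi s (phi s b) = b.
  by rewrite -phiM -[(s * s)%g]/(s ^+ 2)%g antilin_sqr phi1.
exists (fps_add v (phi s v)); split.
- apply: local_parameter_coef.
    by rewrite /fps_add (R_aut_max_ideal (phi_aut s)) /v /in_max_ideal avg_param_coef0 mulr0 ?addr0.
  rewrite /fps_add (R_aut_coef1 (phi_aut s) (phi_const s)) const_act_antilin //.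
  rewrite /v avg_param_coef1 rmorphM rmorph_nat -/a.
  have -> : c * #|Clin|%:R + conjc c * #|Clin|%:R * a = #|Clin|%:R * (c + conjc c * a) by ring.
  rewrite mulf_neq0 ?pnatr_eq0 -?lt0n ?cardG_gt0 // /c.
  case: ifP => [/eqP -> | /negbT a_neqN1]; last by rewrite rmorph1 mul1r addrC addr_eq0.
  by rewrite eq_complex /=; apply/negP => /andP[_ /eqP]; lra.
- case: (phi_aut s) => _ phi_add _ _ _; rewrite phi_add phi_s2.
  by apply: fps_ext => k; rewrite /fps_add addrC.
move=> r r_Clin; case: (phi_aut r) => _ phi_add _ _ _.
rewrite phi_add /v !phi_scale phi_avg_param // phi_antilin_avg_param //.
by rewrite !(const_act_lin _ r_Clin); apply: fps_ext => k; rewrite /fps_add; ring.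
Qed.

End Antilinear.

End FiniteAction.

Theorem proposition6p1 (R : realType) (gT : finGroupType)
    (phi : gT -> (fps R -> fps R))
    (phi_aut : forall g, is_R_aut (phi g))
    (phi_hom : forall g h, phi (g * h)%g = phi g \o phi h)
    (phi_inj : injective phi) :
  ((forall g, is_C_linear (phi g)) /\
   exists (n : nat) (rho : gT),
     [/\ <[rho]>%g = [set: gT], #[rho]%g = n &
       exists w : fps R, local_parameter w /\
         phi rho w = fps_mul (fps_const (xi_n R n)) w])
  \/
  (~ (forall g, is_C_linear (phi g)) /\
   exists (n : nat) (sigma rho : gT),
     [/\ [/\ (sigma ^+ 2 = 1)%g, (rho ^+ n = 1)%g,
             (sigma * rho * sigma^-1 = rho^-1)%g &
             <<[set sigma; rho]>>%g = [set: gT]],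
         ([set: gT]%G \isog Grp (s : r : (s ^+ 2, r ^+ n, s * r * s^-1 = r^-1)))%g &
       exists w : fps R, local_parameter w /\
         [/\ forall a : R[i], phi sigma (fps_const a) = fps_const (conjc a),
             phi sigma w = w,
             forall a : R[i], phi rho (fps_const a) = fps_const a &
             phi rho w = fps_mul (fps_const (xi_n R n)) w]]).
Proof.
have [rho Clin_rho rho_xi] := Clin_generator phi_aut phi_hom phi_inj.
set n := #|Clin phi| in rho_xi; have rho_Clin : rho \in Clin phi by rewrite -Clin_rho cycle_id.
have rho_eigen w : (forall r, r \in Clin phi -> phi r w = fun k => lin_coef phi r * w k) ->
    phi rho w = fps_mul (fps_const (xi_n R n)) w.
  by move=> wE; rewrite wE // rho_xi fps_mul_constl.
have [all_lin | /forallPn[s s_antilin]] := boolP [forall g, g \in Clin phi].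
  left; split=> [g | ]; first exact/(is_C_linearP phi_aut)/(forallP all_lin).
  exists n, rho; split.
  - apply/eqP; rewrite eqEsubset subsetT Clin_rho.
    by apply/subsetP => g _; apply: (forallP all_lin).
  - by rewrite orderE Clin_rho.
  - exists (avg_param phi); split; first exact: local_parameter_avg_param.
    by apply: rho_eigen => r; apply: phi_avg_param.
right; split; first by move/(_ s)/(is_C_linearP phi_aut); apply/negP.
have [w [w_lp s_w r_w]] := antilin_fixed_param phi_aut phi_hom phi_inj s_antilin.
have rn : (rho ^+ n = 1)%g by rewrite /n -Clin_rho -orderE expg_order.
have s2 := antilin_sqr phi_aut phi_hom phi_inj s_antilin.
have srs := antilin_conjg phi_aut phi_hom phi_inj s_antilin rho_Clin.
have gen := antilin_gen phi_aut phi_hom phi_inj s_antilin Clin_rho.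
have cardG := card_antilin phi_aut phi_hom phi_inj s_antilin.
exists n, s, rho; split=> //; first exact: isog_dihedral (cardG_gt0 _) s2 rn srs gen cardG.
exists w; split=> //; split=> //; last exact: rho_eigen.
  by move=> d; rewrite phi_const // const_act_antilin.
by move=> d; rewrite phi_const // const_act_lin.
Qed.
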